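(* Let $q$ be an indeterminate and let $l$ be a positive integer. For $(a,b)\in\{(1,1),(1,0),(0,1)\}$ the following identity of formal power series in $z$ holds: \[ \sum_{m\geq0}\sum_{k\geq0} h_{m-2k}(\{1\}^{k+a},\{q\}^{k+b})\left(\frac{q^l}{[l]^2}\right)^k z^m =\frac{[l]^2}{[2l]}\cdot \begin{cases} \dfrac{[l+1]}{[l]-[l+1]z}-\dfrac{q[l-1]}{[l]-q[l-1]z}, & (a,b)=(1,1),\\[2mm] \dfrac{1}{[l]-[l+1]z}+\dfrac{q^l}{[l]-q[l-1]z}, & (a,b)=(1,0),\\[2mm] \dfrac{q^l}{[l]-[l+1]z}+\dfrac{1}{[l]-q[l-1]z}, & (a,b)=(0,1). \end{cases} \]
   Context: For an integer $k\ge 0$, $[k]=\frac{1-q^k}{1-q}$. For integers $r,s\geq0$, $h_n(\{1\}^r,\{x\}^s)$ denotes the $n$-th complete homogeneous symmetric function in $r+s$ variables of which $r$ are specialized to $1$ and $s$ to $x$, i.e. $\sum_{n\geq0}h_n(\{1\}^r,\{x\}^s)z^n=\frac{1}{(1-z)^r(1-xz)^s}$; in particular $h_n=0$ for $n<0$. By convention $h_n(\{1\}^r,\{x\}^s)=0$ if $r<0$ or $s<0$. *)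

From HB Require Import structures.
From mathcomp Require Import all_boot all_order all_algebra.
Set Implicit Arguments. Unset Strict Implicit. Unset Printing Implicit Defensive.
Import Order.TTheory GRing.Theory Num.Theory.
Local Open Scope ring_scope.

Definition fps (K : fieldType) := nat -> K.

Section FPS.
Variable K : fieldType.
Implicit Types f g : fps K.

Definition fps_const (c : K) : fps K := fun n => if n is 0%N then c else 0.
Definition fps_z : fps K := fun n => if n == 1%N then 1 else 0.
Definition fps_add f g : fps K := fun n => f n + g n.
Definition fps_scale (c : K) f : fps K := fun n => c * f n.
Definition fps_mul f g : fps K := fun n => \sum_(i < n.+1) f i * g (n - i)%N.
Definition fps_pow f (k : nat) : fps K := iter k (fps_mul f) (fps_const 1).

(* Multiplicative inverse of a series with nonzero constant term:
   g 0 = 1/f 0,  g n = -(1/f 0) * sum_(1<=i<=n) f i * g (n-i). *)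
Fixpoint fps_inv_seq f (n : nat) : seq K :=
  match n with
  | 0%N => [:: (f 0%N)^-1]
  | n'.+1 => let s := fps_inv_seq f n' in
      rcons s (- (f 0%N)^-1 * \sum_(1 <= i < n'.+2) f i * nth 0 s (n'.+1 - i))
  end.
Definition fps_inv f : fps K := fun n => nth 0 (fps_inv_seq f n) n.

(* h_n({1}^r,{x}^s) : coefficients of 1/((1-z)^r (1-xz)^s) *)
Definition hcomp (r s : nat) (x : K) : fps K :=
  fps_inv (fps_mul (fps_pow (fps_add (fps_const 1) (fps_scale (-1) fps_z)) r)
                   (fps_pow (fps_add (fps_const 1) (fps_scale (- x) fps_z)) s)).

Definition fps_geom (c d : K) : fps K :=
  fps_inv (fps_add (fps_const c) (fps_scale (- d) fps_z)).
End FPS.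

Definition Qq := {fraction {poly rat}}.
Definition qvar : Qq := tofrac ('X : {poly rat}).

Definition qint (k : nat) : Qq := (1 - qvar ^+ k) / (1 - qvar).

(* LHS: sum_m sum_k h_{m-2k}({1}^{k+a},{q}^{k+b}) (q^l/[l]^2)^k z^m ;
   terms with 2k > m vanish since h_n = 0 for n < 0. *)
Definition lhs_series (l a b : nat) : fps Qq := fun m =>
  \sum_(k < (m./2).+1)
     hcomp (k + a) (k + b) qvar (m - 2 * k)%N * (qvar ^+ l / (qint l ^+ 2)) ^+ k.

From HB Require Import structures.
From mathcomp Require Import all_boot all_order all_algebra.
From mathcomp Require Import boolp ring.
Set Implicit Arguments.
Unset Strict Implicit.
Unset Printing Implicit Defensive.

Import GRing.Theory.
Local Open Scope ring_scope.

(* With A = 1 - z and B = 1 - q z, h_n({1}^r, {q}^s) is the n-th coefficient of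
   H_{r,s} = 1 / (A^r B^s), so with t = q^l / [l]^2 the double sum is
   sum_k (t z^2)^k H_{k+a,k+b} = A B H_{a,b} / (A B - t z^2).  Since
   [l+1] q [l-1] = q [l]^2 - q^l, the denominator factors as
   [l]^-2 ([l] - [l+1] z) ([l] - q [l-1] z), while the numerator A B H_{a,b} is
   1, B or A; the identities are then partial fraction decompositions.
   Power series form a commutative ring in which every series with nonzero
   constant term is regular, so both sides may be compared after multiplying
   by the denominator. *)

Section FpsRing.
Variable K : fieldType.
Implicit Types (f g h : fps K) (c : K).

HB.instance Definition _ := gen_eqMixin (fps K).
HB.instance Definition _ := gen_choiceMixin (fps K).

Definition fps_opp f : fps K := fun n => - f n.

Lemma fps_addA : associative (@fps_add K).
Proof. by move=> f g h; apply: funext => n; apply: addrA. Qed.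

Lemma fps_addC : commutative (@fps_add K).
Proof. by move=> f g; apply: funext => n; apply: addrC. Qed.

Lemma fps_add0 : left_id (fps_const 0) (@fps_add K).
Proof. by move=> f; apply: funext => -[|n]; apply: add0r. Qed.

Lemma fps_addNr : left_inverse (fps_const 0) fps_opp (@fps_add K).
Proof. by move=> f; apply: funext => -[|n]; apply: addNr. Qed.

HB.instance Definition _ :=
  GRing.isZmodule.Build (fps K) fps_addA fps_addC fps_add0 fps_addNr.

Definition fps_trunc n f : {poly K} := \poly_(i < n.+1) f i.

Lemma coef_fps_trunc n f i : (i <= n)%N -> (fps_trunc n f)`_i = f i.
Proof. by rewrite coef_poly ltnS => ->. Qed.

Lemma fps_mul_trunc n f g i : (i <= n)%N ->
  fps_mul f g i = (fps_trunc n f * fps_trunc n g)`_i.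
Proof.
move=> le_in; rewrite coefM; apply: eq_bigr => j _.
have le_jn : (j <= n)%N by rewrite -ltnS (leq_trans (ltn_ord j)) ?ltnS.
by rewrite !coef_fps_trunc // (leq_trans (leq_subr _ _)).
Qed.

Lemma eq_coefM (p p' r r' : {poly K}) m :
    (forall i, (i <= m)%N -> p`_i = p'`_i) -> (forall i, (i <= m)%N -> r`_i = r'`_i) ->
  (p * r)`_m = (p' * r')`_m.
Proof.
move=> ep er; rewrite !coefM; apply: eq_bigr => i _.
by rewrite ep ?er ?leq_subr // -ltnS.
Qed.

Lemma fps_mulA : associative (@fps_mul K).
Proof.
move=> f g h; apply: funext => m.
have trunc_mul u v i : (i <= m)%N ->
    (fps_trunc m (fps_mul u v))`_i = (fps_trunc m u * fps_trunc m v)`_i.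
  by move=> le_im; rewrite coef_fps_trunc // (fps_mul_trunc (n:=m)).
rewrite (fps_mul_trunc (n:=m) f) // (fps_mul_trunc (n:=m) _ h) //.
transitivity ((fps_trunc m f * (fps_trunc m g * fps_trunc m h))`_m).
  by apply: eq_coefM => [i _ // | i]; apply: trunc_mul.
by rewrite mulrA; apply: eq_coefM => [i le_im | i _ //]; rewrite trunc_mul.
Qed.

Lemma fps_mulC : commutative (@fps_mul K).
Proof. by move=> f g; apply: funext => n; rewrite !(fps_mul_trunc (n:=n)) // mulrC. Qed.

Lemma fps_mul1 : left_id (fps_const 1) (@fps_mul K).
Proof.
move=> f; apply: funext => n; rewrite /fps_mul big_ord_recl mul1r subn0 big1 ?addr0 //.
by move=> i _; rewrite mul0r.
Qed.

Lemma fps_mulDl : left_distributive (@fps_mul K) (@fps_add K).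
Proof.
move=> f g h; apply: funext => n; rewrite /fps_mul /fps_add -big_split.
by apply: eq_bigr => i _; rewrite mulrDl.
Qed.

Lemma fps_oner_neq0 : fps_const 1 != fps_const 0 :> fps K.
Proof. by apply/eqP => /(congr1 (fun f : fps K => f 0%N))/eqP; rewrite oner_eq0. Qed.

HB.instance Definition _ := GRing.Zmodule_isComNzRing.Build (fps K)
  fps_mulA fps_mulC fps_mul1 fps_mulDl fps_oner_neq0.

Lemma fps_mulE f g : f * g = fps_mul f g. Proof. by []. Qed.
Lemma coef_fpsD f g n : (f + g) n = f n + g n. Proof. by []. Qed.
Lemma coef_fpsN f n : (- f) n = - f n. Proof. by []. Qed.
Lemma coef_fps0 n : (0 : fps K) n = 0. Proof. by case: n. Qed.

Lemma fps_const_is_nmod_morphism : nmod_morphism (@fps_const K).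
Proof.
split=> [|a b]; apply: funext => -[|n] //.
by rewrite coef_fpsD /= addr0.
Qed.

Lemma coef_fps_constM c f n : (fps_const c * f) n = c * f n.
Proof.
rewrite fps_mulE /fps_mul big_ord_recl subn0 big1 ?addr0 // => i _.
by rewrite mul0r.
Qed.

Lemma fps_const_is_monoid_morphism : monoid_morphism (@fps_const K).
Proof. by split=> // a b; apply: funext => -[|n]; rewrite coef_fps_constM //= mulr0. Qed.

HB.instance Definition _ := GRing.isNmodMorphism.Build K (fps K) (@fps_const K)
  fps_const_is_nmod_morphism.
HB.instance Definition _ := GRing.isMonoidMorphism.Build K (fps K) (@fps_const K)
  fps_const_is_monoid_morphism.

Lemma fps_addE f g : fps_add f g = f + g. Proof. by []. Qed.

Lemma fps_scaleE c f : fps_scale c f = fps_const c * f.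
Proof. by apply: funext => n; rewrite coef_fps_constM. Qed.

Lemma fps_powE f k : fps_pow f k = f ^+ k.
Proof. by elim: k => //= k ->; rewrite exprS. Qed.

Lemma coef0_fpsM f g : (f * g) 0%N = f 0%N * g 0%N.
Proof. by rewrite fps_mulE /fps_mul big_ord1. Qed.

Lemma coef0_fpsX f k : (f ^+ k) 0%N = f 0%N ^+ k.
Proof. by elim: k => [|k IH]; rewrite ?expr0 // !exprS coef0_fpsM IH. Qed.

Lemma coef_fps_zM f n : (fps_z K * f) n = if n is n'.+1 then f n' else 0.
Proof.
rewrite fps_mulE /fps_mul big_ord_recl mul0r add0r.
case: n => [|n]; first by rewrite big_ord0.
by rewrite big_ord_recl mul1r subSS subn0 big1 ?addr0 // => i _; rewrite mul0r.
Qed.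

Lemma coef_fps_zXM j f n :
  (fps_z K ^+ j * f) n = if (j <= n)%N then f (n - j)%N else 0.
Proof.
elim: j f n => [|j IH] f n; first by rewrite mul1r subn0.
rewrite exprSr -mulrA IH coef_fps_zM.
case: (ltngtP j n) => [lt_jn | // | <-]; last by rewrite subnn.
by rewrite -(subnSK lt_jn).
Qed.

Lemma size_fps_inv_seq f n : size (fps_inv_seq f n) = n.+1.
Proof. by elim: n => //= n IH; rewrite size_rcons IH. Qed.

Lemma nth_fps_inv_seq f n i : (i <= n)%N -> nth 0 (fps_inv_seq f n) i = fps_inv f i.
Proof.
elim: n => [|n IH]; first by rewrite leqn0 => /eqP->.
rewrite leq_eqVlt => /predU1P[-> // | lt_in].
by rewrite /= nth_rcons size_fps_inv_seq lt_in IH.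
Qed.

Lemma fps_invS f n :
  fps_inv f n.+1 = - (f 0%N)^-1 * \sum_(i < n.+1) f i.+1 * fps_inv f (n - i)%N.
Proof.
rewrite {1}/fps_inv /= nth_rcons size_fps_inv_seq ltnn eqxx big_add1 big_mkord.
by congr (_ * _); apply: eq_bigr => i _; rewrite subSS nth_fps_inv_seq ?leq_subr.
Qed.

Lemma fps_mulV f : f 0%N != 0 -> f * fps_inv f = 1.
Proof.
move=> f0_neq0; apply: funext => -[|n]; first by rewrite coef0_fpsM mulfV.
rewrite fps_mulE /fps_mul big_ord_recl subn0 fps_invS mulrA mulrN mulfV // mulN1r.
by under [X in _ + X]eq_bigr => i _ do rewrite subSS; rewrite addNr.
Qed.

Lemma fps_lreg f : f 0%N != 0 -> GRing.lreg f.
Proof.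
move=> /fps_mulV f_inv g h /(congr1 ( *%R (fps_inv f))).
by rewrite !mulrA ![fps_inv f * f]mulrC f_inv !mul1r.
Qed.

Lemma coef_fps_sum I (r : seq I) (P : pred I) (F : I -> fps K) n :
  (\sum_(i <- r | P i) F i) n = \sum_(i <- r | P i) F i n.
Proof. by apply: (big_morph (fun f : fps K => f n)) => [f g|]; rewrite ?coef_fps0. Qed.

Lemma eq_coef_fpsMr f g h m :
  (forall i, (i <= m)%N -> g i = h i) -> (f * g) m = (f * h) m.
Proof. by move=> eq_g; rewrite !fps_mulE; apply: eq_bigr => i _; rewrite eq_g ?leq_subr. Qed.

Lemma coef0_fps_linear c d : (fps_const c - fps_const d * fps_z K) 0%N = c.
Proof. by rewrite coef_fpsD coef_fpsN coef_fps_constM mulr0 subr0. Qed.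

Lemma mul_fps_geom c d : c != 0 -> (fps_const c - fps_const d * fps_z K) * fps_geom c d = 1.
Proof.
move=> c_neq0; rewrite /fps_geom fps_addE fps_scaleE rmorphN mulNr.
by rewrite fps_mulV ?coef0_fps_linear.
Qed.

End FpsRing.

Section CompleteHomogeneous.
Variables (K : fieldType) (x t : K).
Local Notation z := (fps_z K).
Local Notation A := (1 - z).
Local Notation B := (1 - fps_const x * z).

Lemma hcompE r s : hcomp r s x = fps_inv (A ^+ r * B ^+ s).
Proof.
rewrite /hcomp -fps_mulE !fps_powE !fps_addE !fps_scaleE.
by rewrite rmorph1 rmorphN1 rmorphN mulN1r mulNr.
Qed.

Lemma coef0_AB r s : (A ^+ r * B ^+ s) 0%N = 1.
Proof.
have A0 : A 0%N = 1 by rewrite -(coef0_fps_linear 1 1) rmorph1 mul1r.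
by rewrite coef0_fpsM !coef0_fpsX A0 coef0_fps_linear !expr1n mulr1.
Qed.

Lemma mul_hcomp r s : A ^+ r * B ^+ s * hcomp r s x = 1.
Proof. by rewrite hcompE fps_mulV ?coef0_AB ?oner_neq0. Qed.

Lemma hcompSS r s : A * B * hcomp r.+1 s.+1 x = hcomp r s x.
Proof.
apply: (@fps_lreg _ (A ^+ r * B ^+ s)); first by rewrite coef0_AB oner_neq0.
by rewrite mul_hcomp -[RHS](mul_hcomp r.+1 s.+1) !exprS; ring.
Qed.

Definition hsum (a b : nat) : fps K := fun m =>
  \sum_(k < (m./2).+1) hcomp (k + a) (k + b) x (m - 2 * k)%N * t ^+ k.

Local Notation W := (fps_const t * z ^+ 2).

Lemma AB_hcomp11 : A * B * hcomp 1 1 x = 1.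
Proof. by rewrite hcompSS -(mul_hcomp 0 0) !mul1r. Qed.

Lemma AB_hcomp10 : A * B * hcomp 1 0 x = B.
Proof. by have := mul_hcomp 1 0; rewrite expr1 expr0 mulr1 mulrAC => ->; rewrite mul1r. Qed.

Lemma AB_hcomp01 : A * B * hcomp 0 1 x = A.
Proof. by have := mul_hcomp 0 1; rewrite expr1 expr0 mul1r -mulrA => ->; rewrite mulr1. Qed.

Lemma coef_WXM k f n :
  (W ^+ k * f) n = t ^+ k * (if (2 * k <= n)%N then f (n - 2 * k)%N else 0).
Proof. by rewrite exprMn -rmorphXn -exprM -mulrA coef_fps_constM coef_fps_zXM mulnC. Qed.

Definition hsum_trunc a b N : fps K := \sum_(k < N) W ^+ k * hcomp (k + a) (k + b) x.

Lemma coef_hsum_trunc a b m i : (i <= m)%N -> hsum a b i = hsum_trunc a b m.+1 i.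
Proof.
move=> le_im; rewrite /hsum_trunc coef_fps_sum /hsum.
rewrite (big_ord_widen m.+1
  (fun k => hcomp (k + a) (k + b) x (i - 2 * k)%N * t ^+ k)); last first.
  by rewrite ltnS (leq_trans (half_leq le_im)) // -divn2 leq_div.
rewrite big_mkcond; apply: eq_bigr => k _.
by rewrite coef_WXM ltnS geq_half_double -mul2n; case: ifP; rewrite ?mulr0 // mulrC.
Qed.

Lemma mul_hsum_trunc a b N : (A * B - W) * hsum_trunc a b N.+1 =
  A * B * hcomp a b x - W ^+ N.+1 * hcomp (N + a) (N + b) x.
Proof.
elim: N => [|N IH]; first by rewrite /hsum_trunc big_ord1 !add0n expr1; ring.
rewrite /hsum_trunc big_ord_recr /= mulrDr IH -(hcompSS (N + a) (N + b)) !addSn.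
by rewrite [W ^+ N.+2]exprS; ring.
Qed.

Lemma mul_hsum a b : (A * B - W) * hsum a b = A * B * hcomp a b x.
Proof.
apply: funext => m.
rewrite (eq_coef_fpsMr _ (h := hsum_trunc a b m.+1)); last by move=> i; apply: coef_hsum_trunc.
rewrite mul_hsum_trunc coef_fpsD coef_fpsN coef_WXM ifN ?mulr0 ?subr0 // -ltnNge.
by rewrite mul2n -addnn addnS ltnS leq_addl.
Qed.

End CompleteHomogeneous.

Section PartialFractions.
Variables (K : fieldType) (x t k c1 d1 c2 d2 : K).
Hypotheses (c1_neq0 : c1 != 0) (c2_neq0 : c2 != 0).
Hypotheses (c1c2 : c1 * c2 = k) (c1d2_c2d1 : c1 * d2 + c2 * d1 = k * (1 + x))
  (d1d2 : d1 * d2 = k * (x - t)).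
Local Notation z := (fps_z K).
Local Notation P1 := (fps_const c1 - fps_const d1 * z).
Local Notation P2 := (fps_const c2 - fps_const d2 * z).

Lemma hsum_denominator_factor :
  fps_const k * ((1 - z) * (1 - fps_const x * z) - fps_const t * z ^+ 2) = P1 * P2.
Proof.
transitivity (fps_const (c1 * c2) - fps_const (c1 * d2 + c2 * d1) * z
              + fps_const (d1 * d2) * z ^+ 2).
  by rewrite c1c2 c1d2_c2d1 d1d2; ring.
by ring.
Qed.

Lemma hsum_partial_fractions a b n0 n1 c u1 u2 :
    (1 - z) * (1 - fps_const x * z) * hcomp a b x = fps_const n0 - fps_const n1 * z ->
    c * (u1 * c2 + u2 * c1) = k * n0 -> c * (u1 * d2 + u2 * d1) = k * n1 ->
  hsum x t a b = fps_const c * (fps_const u1 * fps_geom c1 d1 + fps_const u2 * fps_geom c2 d2).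
Proof.
move=> numer e0 e1; apply: (@fps_lreg _ (P1 * P2)).
  by rewrite coef0_fpsM !coef0_fps_linear mulf_neq0.
rewrite -{1}hsum_denominator_factor -mulrA mul_hsum numer.
transitivity (fps_const c * (fps_const u1 * P2 * (P1 * fps_geom c1 d1) +
                             fps_const u2 * P1 * (P2 * fps_geom c2 d2))); last by ring.
rewrite !mul_fps_geom // !mulr1.
transitivity (fps_const (k * n0) - fps_const (k * n1) * z); first by ring.
by rewrite -e0 -e1; ring.
Qed.

End PartialFractions.

Section QAnalogue.
Variables (K : fieldType) (q Q : K).
Hypotheses (q_neq1 : 1 - q != 0) (Q_neq1 : 1 - Q != 0) (Q2_neq1 : 1 - Q ^+ 2 != 0).
Local Notation z := (fps_z K).
Local Notation L := ((1 - Q) / (1 - q)).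
Local Notation L1 := ((1 - q * Q) / (1 - q)).
Local Notation L2 := ((1 - Q ^+ 2) / (1 - q)).
Local Notation qLm := ((q - Q) / (1 - q)).
(* For [Q = q ^+ l] these are [[l]], [[l+1]], [[2l]] and [q [l-1]]. *)

Local Ltac q_field := field; rewrite ?q_neq1 ?Q_neq1 ?Q2_neq1.

Lemma hsum_q_partial_fractions :
  let c := L ^+ 2 / L2 in
  let G1 := fps_geom L L1 in
  let G2 := fps_geom L qLm in
  [/\ hsum q (Q / L ^+ 2) 1 1 = fps_const c * (fps_const L1 * G1 + fps_const (- qLm) * G2),
      hsum q (Q / L ^+ 2) 1 0 = fps_const c * (G1 + fps_const Q * G2) &
      hsum q (Q / L ^+ 2) 0 1 = fps_const c * (fps_const Q * G1 + G2)].
Proof.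
move=> c G1 G2; rewrite {}/c {}/G1 {}/G2.
have L_neq0 : L != 0 by rewrite mulf_neq0 ?invr_eq0.
have pf := hsum_partial_fractions L_neq0 L_neq0 (esym (expr2 L))
  (ltac:(by q_field) : L * qLm + L * L1 = L ^+ 2 * (1 + q))
  (ltac:(by q_field) : L1 * qLm = L ^+ 2 * (q - Q / L ^+ 2)).
have numer11 : (1 - z) * (1 - fps_const q * z) * hcomp 1 1 q = fps_const 1 - fps_const 0 * z.
  by rewrite AB_hcomp11 rmorph1 rmorph0 mul0r subr0.
have numer10 : (1 - z) * (1 - fps_const q * z) * hcomp 1 0 q = fps_const 1 - fps_const q * z.
  by rewrite AB_hcomp10 rmorph1.
have numer01 : (1 - z) * (1 - fps_const q * z) * hcomp 0 1 q = fps_const 1 - fps_const 1 * z.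
  by rewrite AB_hcomp01 rmorph1 mul1r.
split.
- by rewrite (pf _ _ _ _ (L ^+ 2 / L2) L1 (- qLm) numer11) //; q_field.
- by rewrite (pf _ _ _ _ (L ^+ 2 / L2) 1 Q numer10) ?rmorph1 ?mul1r //; q_field.
- by rewrite (pf _ _ _ _ (L ^+ 2 / L2) Q 1 numer01) ?rmorph1 ?mul1r //; q_field.
Qed.

End QAnalogue.

Lemma lhs_seriesE l a b : lhs_series l a b = hsum qvar (qvar ^+ l / qint l ^+ 2) a b.
Proof. by []. Qed.

Lemma one_sub_qvarX_neq0 k : (0 < k)%N -> 1 - qvar ^+ k != 0.
Proof.
move=> k_gt0; rewrite /qvar -tofracXn -tofrac1 -tofracB tofrac_eq0.
apply: contraTneq k_gt0 => /(congr1 (fun p : {poly rat} => p`_0)).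
by rewrite coefB coef1 coefXn coef0; case: k.
Qed.

Theorem lemma2p1 (l : nat) (hl : (0 < l)%N) :
  let c := qint l ^+ 2 / qint (2 * l) in
  let G1 := fps_geom (qint l) (qint l.+1) in
  let G2 := fps_geom (qint l) (qvar * qint l.-1) in
  [/\ lhs_series l 1 1 =
        fps_scale c (fps_add (fps_scale (qint l.+1) G1)
                             (fps_scale (- (qvar * qint l.-1)) G2)),
      lhs_series l 1 0 =
        fps_scale c (fps_add G1 (fps_scale (qvar ^+ l) G2)) &
      lhs_series l 0 1 =
        fps_scale c (fps_add (fps_scale (qvar ^+ l) G1) G2)].
Proof.
move=> c G1 G2.
have q_neq1 : 1 - qvar != 0 by rewrite -[qvar]expr1 one_sub_qvarX_neq0.
have Q2_neq1 : 1 - (qvar ^+ l) ^+ 2 != 0 by rewrite -exprM one_sub_qvarX_neq0 ?muln_gt0 ?hl.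
have qint_S : qint l.+1 = (1 - qvar * qvar ^+ l) / (1 - qvar) by rewrite /qint exprS.
have qint_2 : qint (2 * l) = (1 - (qvar ^+ l) ^+ 2) / (1 - qvar) by rewrite /qint mulnC exprM.
have qint_P : qvar * qint l.-1 = (qvar - qvar ^+ l) / (1 - qvar).
  by rewrite /qint -{2}(prednK hl) exprS mulrA mulrBr mulr1.
rewrite /c /G1 /G2 !lhs_seriesE qint_S qint_2 qint_P !fps_scaleE !fps_addE.
exact: hsum_q_partial_fractions q_neq1 (one_sub_qvarX_neq0 hl) Q2_neq1.
Qed.
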